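(* Let $(S,A,P,R,\Gamma)$ be a finite MDP, $\mathcal{C}=\mathring{\mathcal{C}}\cup\partial\mathcal{C}$ a cluster, and $\pi_{\mathcal{C}}$ a policy on $\mathcal{C}$ for which $\partial\mathcal{C}$ is $\pi_{\mathcal{C}}$-reachable; let $a\in\widetilde{A}$ be the coarse action ''execute $\pi_{\mathcal{C}}$ in $\mathcal{C}$'' and $(X_t)_{t\ge0}$ the associated controlled Markov chain with transition matrix $P^{\pi_{\mathcal{C}}}_{\mathcal{C}}$. The coarse discount factors are characterized by \[ \widetilde{\Gamma}(s,a,s')=\mathbb{E}_s[\Delta_0^{T_1}\mid X_{T_1}=s'],\qquad(s,s')\in\operatorname{supp}_a(\widetilde{P}), \] and, letting $H_{s,s'}:=\widetilde{\Gamma}(s,a,s')$ (and $H_{s,s'}=\mathbb{E}_s[\Delta_0^{T_0}\mid X_{T_0}=s']$ for interior $s$), they may be computed by finding the minimal non-negative solution $H$ of the linear system \[ H_{s,s'}=\sum_{s''\in\mathring{\mathcal{C}}\cap\mathcal{C}'_{s'},\,a'\in A}P_{h_{s'}}(s,a',s'')\Gamma(s,a',s'')H_{s'',s'}+\sum_{a'\in A}P_{h_{s'}}(s,a',s')\Gamma(s,a',s'),\quad s\in\mathring{\mathcal{C}}\cap\mathcal{C}'_{s'}, \] \[ H_{s,s'}=\sum_{s''\in\mathring{\mathcal{C}}\cap\mathcal{C}'_{s'},\,a'\in A}P_{\tilde h_{s'}}(s,a',s'')\Gamma(s,a',s'')H_{s'',s'}+\sum_{a'\in A}P_{\tilde h_{s'}}(s,a',s')\Gamma(s,a',s'),\quad(s,s')\in\operatorname{supp}_a(\widetilde{P}).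 \]
   Context: A finite MDP $(S,A,P,R,\Gamma)$ has finite statespace $S$, finite action set $A$, transition tensor $P(s,a,s')$, bounded rewards $R$, discount factors $\Gamma(s,a,s')\in(0,1)$. A policy gives distributions $\pi(s,\cdot)$ on $A$. With bottleneck set $\mathcal{B}$, a cluster $\mathcal{C}$ is a disjoint union of interior $\mathring{\mathcal{C}}\subseteq S\setminus\mathcal{B}$ and boundary $\partial\mathcal{C}\subseteq\mathcal{B}$. The restriction is $P_{\mathcal{C}}(s,a,s')=P(s,a,s')$ for $s\ne s'\in\mathcal{C}$, $P_{\mathcal{C}}(s,a,s)=P(s,a,s)+\sum_{s''\notin\mathcal{C}}P(s,a,s'')$; $P^\pi_{\mathcal{C}}(s,s')=\sum_aP_{\mathcal{C}}(s,a,s')\pi(s,a)$; $\partial\mathcal{C}$ is $\pi$-reachable if reached in finitely many steps of $P^\pi_{\mathcal{C}}$ from every state in $\mathcal{C}$. The chain: $a_{t+1}\sim\pi_{\mathcal{C}}(X_t)$, $X_{t+1}\sim P_{\mathcal{C}}(X_t,a_{t+1},\cdot)$; $\mathbb{E}_s,\mathbb{P}_s$ condition on $X_0=s$. Hitting times $T_0=\inf\{t\ge0:X_t\in\partial\mathcal{C}\}$, $T_m=\inf\{t>T_{m-1}:X_t\in\partial\mathcal{C}\}$. For stopping times $0\le T<T'<\infty$, $\Delta_T^{T'}=\prod_{t=T}^{T'-1}\Gamma(X_t,a_{t+1},X_{t+1})$. $\widetilde{P}(s,a,s')=\mathbb{P}_s(X_{T_1}=s')$ for $s,s'\in\partial\mathcal{C}$;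 $\operatorname{supp}_a(\widetilde{P})=\{(s,s')\in\partial\mathcal{C}^2:\widetilde{P}(s,a,s')>0\}$. For $s'\in\partial\mathcal{C}$, $h_{s'}(s)=\mathbb{P}_s(X_{T_0}=s')$ is the minimal non-negative function with $h_{s'}(s)=\delta_{s,s'}$ on $\partial\mathcal{C}$ and $h_{s'}(s)=P^{\pi_{\mathcal{C}}}_{\mathcal{C}}(s,s')+\sum_{s''\in\mathring{\mathcal{C}}}P^{\pi_{\mathcal{C}}}_{\mathcal{C}}(s,s'')h_{s'}(s'')$ on $\mathring{\mathcal{C}}$. $\mathcal{C}'_{s'}=\{s\in\mathcal{C}:h_{s'}(s)>0\}$, $P_{h_{s'}}(s,a',s'')=P_{\mathcal{C}}(s,a',s'')\pi_{\mathcal{C}}(s,a')h_{s'}(s'')/h_{s'}(s)$ for $s\in\mathring{\mathcal{C}}\cap\mathcal{C}'_{s'}$, and $P_{\tilde h_{s'}}(s,a',s'')=P_{\mathcal{C}}(s,a',s'')\pi_{\mathcal{C}}(s,a')h_{s'}(s'')/\widetilde{P}(s,a,s')$ for $(s,s')\in\operatorname{supp}_a(\widetilde{P})$, with $a'\in A$, $s''\in\mathcal{C}'_{s'}$. *)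

From HB Require Import structures.
From mathcomp Require Import all_boot all_order all_algebra.
From mathcomp Require Import all_classical all_reals.
From mathcomp Require Import topology normedtype sequences.
Set Implicit Arguments. Unset Strict Implicit. Unset Printing Implicit Defensive.
Import Order.TTheory GRing.Theory Num.Theory numFieldNormedType.Exports.
Local Open Scope ring_scope.

Section MDP.
Variables (R : realType) (S A : finType).
Variables (P : S -> A -> S -> R) (Gam : S -> A -> S -> R) (pi : S -> A -> R).
Variables (Ci Cb : {set S}).

Definition inC (s : S) : bool := (s \in Ci) || (s \in Cb).

Definition PC (s : S) (a : A) (s' : S) : R :=
  if ~~ inC s' then 0
  else if s == s' then P s a s + \sum_(s'' | ~~ inC s'') P s a s''
  else P s a s'.

Definition PpiC (s s' : S) : R := \sum_(a : A) PC s a s' * pi s a.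

Fixpoint reachN (n : nat) (s : S) : bool :=
  if n is m.+1 then (s \in Cb) || [exists s'', (0 < PpiC s s'') && reachN m s'']
  else s \in Cb.

Definition pi_reachable : Prop :=
  forall s, inC s -> exists n, reachN n s.

(* One step (X_t, a_{t+1}, X_{t+1}) of the controlled chain: probability
   pi(X_t,a_{t+1}) P_C(X_t,a_{t+1},X_{t+1}), multiplied by the discount
   Gamma(X_t,a_{t+1},X_{t+1}) when [disc] is true. *)
Definition stepw (disc : bool) (x : S) (a : A) (y : S) : R :=
  pi x a * PC x a y * (if disc then Gam x a y else 1).

(* A trajectory of n+1 steps started at s is p : 'I_(n+1) -> A * S with
   p t = (a_{t+1}, X_{t+1}).  [prevst s p t] is X_t. *)
Definition prevst n (s : S) (p : {ffun 'I_n.+1 -> A * S}) (t : 'I_n.+1) : S :=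
  if val t is k.+1 then (p (inord k)).2 else s.

(* E_s[ Delta_0^{n+1} ; first visit to Cb after time 0 happens at time n+1
   and at state s' ]  (disc = true),  or the probability of that event
   (disc = false). *)
Definition firstHitW (disc : bool) (n : nat) (s s' : S) : R :=
  \sum_(p : {ffun 'I_n.+1 -> A * S} |
        [forall t : 'I_n.+1, (val t < n)%N ==> ((p t).2 \notin Cb)]
        && ((p ord_max).2 == s'))
    \prod_(t < n.+1) stepw disc (prevst s p t) (p t).1 (p t).2.

(* For s in Cb: E_s[Delta_0^{T_1} ; X_{T_1} = s'] ; for s in Ci the same
   expression is E_s[Delta_0^{T_0} ; X_{T_0} = s'] (since then T_0 >= 1). *)
(* infinite sums are limits of partial sums (all terms are non-negative) *)
Definition discHit (s s' : S) : R :=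
  limn (fun N => \sum_(n < N) firstHitW true n s s').
Definition probHit (s s' : S) : R :=
  limn (fun N => \sum_(n < N) firstHitW false n s s').

Definition Ptilde (s s' : S) : R := probHit s s'.

(* h_{s'}(s) = P_s(X_{T_0} = s') *)
Definition h (s' s : S) : R := if s \in Cb then (s == s')%:R else probHit s s'.

Definition suppPt (s s' : S) : bool := [&& s \in Cb, s' \in Cb & 0 < Ptilde s s'].

Definition Cprime (s' s : S) : bool := inC s && (0 < h s' s).

Definition Gtilde (s s' : S) : R := discHit s s' / Ptilde s s'.
Definition Hcond (s s' : S) : R :=
  if s \in Cb then Gtilde s s' else discHit s s' / h s' s.

Definition Ph (s' s : S) (a' : A) (s'' : S) : R :=
  PC s a' s'' * pi s a' * h s' s'' / h s' s.
Definition Pht (s' s : S) (a' : A) (s'' : S) : R :=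
  PC s a' s'' * pi s a' * h s' s'' / Ptilde s s'.

Definition sysDom (s s' : S) : bool :=
  (s' \in Cb) && (((s \in Ci) && Cprime s' s) || suppPt s s').

Definition sysRHS (K : S -> A -> S -> R) (H : S -> S -> R) (s s' : S) : R :=
  \sum_(s'' | (s'' \in Ci) && Cprime s' s'') \sum_(a' : A)
      K s a' s'' * Gam s a' s'' * H s'' s'
  + \sum_(a' : A) K s a' s' * Gam s a' s'.

Definition solvesSys (H : S -> S -> R) : Prop :=
  (forall s s', s' \in Cb -> s \in Ci -> Cprime s' s ->
     H s s' = sysRHS (Ph s') H s s') /\
  (forall s s', suppPt s s' -> H s s' = sysRHS (Pht s') H s s').

Definition minNonnegSol (H : S -> S -> R) : Prop :=
  solvesSys H /\ (forall s s', sysDom s s' -> 0 <= H s s') /\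
  (forall G : S -> S -> R, solvesSys G -> (forall s s', sysDom s s' -> 0 <= G s s') ->
     forall s s', sysDom s s' -> H s s' <= G s s').

End MDP.

From Pilot Require Import Defs.
From HB Require Import structures.
From mathcomp Require Import all_boot all_order all_algebra.
From mathcomp Require Import all_classical all_reals.
From mathcomp Require Import topology normedtype sequences.
From mathcomp Require Import ring lra.
Set Implicit Arguments. Unset Strict Implicit. Unset Printing Implicit Defensive.
Import Order.TTheory GRing.Theory Num.Theory numFieldNormedType.Exports.
Local Open Scope classical_set_scope.
Local Open Scope ring_scope.

(* Splitting off the first step of a trajectory expresses the truncated
   first-hitting sums by the one-step recursion
     E_n+1(s) = sum_{a, y interior} pi(s,a) P_C(s,a,y) Gamma(s,a,y) E_n(y),
   and letting n -> oo gives the same recursion for the discounted hitting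
   weight D(s,s') and (with Gamma = 1) for the hitting probability h_s'(s).
   Dividing the first by the second is exactly the h-transformed system, so
   H = D / h solves it.  It is moreover the only solution on the interior
   part of C'_s': the difference of two solutions is a fixed point of the
   kernel P_h Gamma, whose row sums are at most max Gamma < 1 because P_h is
   substochastic there.  The boundary equations then express H(s,s') as a
   monotone function of the interior values, whence minimality. *)

Section FfunCons.
Variable T : finType.

Definition fcons {n} (x : T) (q : {ffun 'I_n -> T}) : {ffun 'I_n.+1 -> T} :=
  [ffun t => if unlift ord0 t is Some t' then q t' else x].

Lemma fcons0 n x (q : {ffun 'I_n -> T}) : fcons x q ord0 = x.
Proof. by rewrite /fcons ffunE unlift_none. Qed.

Lemma fconsS n x (q : {ffun 'I_n -> T}) t : fcons x q (lift ord0 t) = q t.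
Proof. by rewrite /fcons ffunE liftK. Qed.

Lemma big_ffun_fcons (V : nmodType) n (F : {ffun 'I_n.+1 -> T} -> V) :
  \sum_p F p = \sum_x \sum_(q : {ffun 'I_n -> T}) F (fcons x q).
Proof.
rewrite pair_big /=.
rewrite (reindex (fun y : T * {ffun 'I_n -> T} => fcons y.1 y.2)) //=.
exists (fun p => (p ord0, [ffun t => p (lift ord0 t)])) => [[x q] _|p _] /=.
  by rewrite fcons0; congr pair; apply/ffunP => t; rewrite ffunE fconsS.
apply/ffunP => t; case: (unliftP ord0 t) => [t'|] ->.
  by rewrite fconsS ffunE.
by rewrite fcons0.
Qed.

Lemma big_ffun_ord0_cst (V : nmodType) (G : {ffun 'I_0 -> T} -> V) c :
  (forall q, G q = c) -> \sum_q G q = c.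
Proof.
move=> Gc; rewrite (eq_bigr (fun _ => c)) // sumr_const card_ffun card_ord.
by rewrite expn0 mulr1n.
Qed.

End FfunCons.
Arguments fcons {T n}.

Lemma forall_ord_recl n (Q : pred 'I_n.+1) :
  [forall t, Q t] = Q ord0 && [forall t : 'I_n, Q (lift ord0 t)].
Proof.
apply/forallP/andP => [Q_all|[Q0 /forallP QS]]; first by split; [|apply/forallP].
by move=> t; case: (unliftP ord0 t) => [t'|] ->.
Qed.

Section Contraction.
Variable R : realFieldType.

Lemma uniform_lt1_bound (I : finType) (f : I -> R) :
  (forall i, f i < 1) -> exists c, [/\ 0 <= c, c < 1 & forall i, f i <= c].
Proof.
move=> f_lt1; exists (\big[Order.max/0]_i f i); split.
- exact: bigmax_ge_id.
- by apply: bigmax_lt.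
- by move=> i; apply: le_bigmax.
Qed.

Lemma contraction_fixpoint_eq0 (I : finType) (D : pred I) (Q : I -> I -> R)
    (x : I -> R) c :
  0 <= c -> c < 1 -> (forall i j, 0 <= Q i j) ->
  (forall i, D i -> \sum_(j | D j) Q i j <= c) ->
  (forall i, D i -> x i = \sum_(j | D j) Q i j * x j) ->
  forall i, D i -> x i = 0.
Proof.
move=> c_ge0 c_lt1 Q_ge0 Q_rows x_fix.
pose m := \big[Order.max/0]_(j | D j) `|x j|.
have x_le_m j : D j -> `|x j| <= m by move=> Dj; apply: le_bigmax_cond.
have m_ge0 : 0 <= m by apply: bigmax_ge_id.
have x_le_cm i : D i -> `|x i| <= c * m.
  move=> Di; rewrite x_fix //; apply: le_trans (ler_norm_sum _ _ _) _.
  apply: (@le_trans _ _ (\sum_(j | D j) Q i j * m)).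
    apply: ler_sum => j Dj; rewrite normrM ger0_norm //.
    by apply: ler_wpM2l => //; apply: x_le_m.
  by rewrite -big_distrl /=; apply: ler_wpM2r => //; apply: Q_rows.
have m_le_cm : m <= c * m by apply: bigmax_le => //; apply: mulr_ge0.
have m0 : m <= 0 by nra.
move=> i Di; apply/eqP; rewrite -normr_le0; exact: le_trans (x_le_m i Di) m0.
Qed.

End Contraction.

Section FirstHit.
Variables (R : realType) (S A : finType).
Variables (P : S -> A -> S -> R) (Gam : S -> A -> S -> R) (pi : S -> A -> R).
Variables (Ci Cb : {set S}).

Local Notation w := (stepw P Gam pi Ci Cb).
Local Notation F := (firstHitW P Gam pi Ci Cb).
Local Notation inC := (inC Ci Cb).
Local Notation PC := (PC P Ci Cb).

Lemma prevst_fcons n s x (q : {ffun 'I_n.+1 -> A * S}) t :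
  prevst s (fcons x q) (lift ord0 t) = prevst x.2 q t.
Proof.
rewrite /prevst (lift0 t : val _ = _); case: t => [[|k] lt_k] /=.
  have ->: inord 0 = ord0 :> 'I_n.+2 by apply/val_inj; rewrite /= inordK.
  by rewrite fcons0.
have ->: (inord k.+1 : 'I_n.+2) = lift ord0 (inord k : 'I_n.+1).
  by apply/ord_inj; rewrite lift0 !inordK // ltnW.
by rewrite fconsS.
Qed.

Lemma firstHitW0 d s s' : F d 0 s s' = \sum_a w d s a s'.
Proof.
rewrite /firstHitW big_mkcond big_ffun_fcons /=.
have -> : \sum_a w d s a s' =
          \sum_a \sum_(y : S) (if y == s' then w d s a y else 0).
  by apply: eq_bigr => a _; rewrite -big_mkcond /= big_pred1_eq.
rewrite [RHS]pair_big /=; apply: eq_bigr => [[a y]] _ /=.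
apply: big_ffun_ord0_cst => q; rewrite (ord1 ord_max) fcons0 /=.
have -> : [forall t : 'I_1, (val t < 0)%N ==> ((fcons (a, y) q t).2 \notin Cb)].
  by apply/forallP => t; rewrite ltn0.
by rewrite big_ord1 fcons0.
Qed.

Lemma firstHitWS d n s s' : F d n.+1 s s' =
  \sum_a \sum_(y | y \notin Cb) w d s a y * F d n y s'.
Proof.
rewrite /firstHitW big_mkcond big_ffun_fcons /=.
rewrite [RHS](eq_bigr (fun a => \sum_(y : S) \sum_(q : {ffun 'I_n.+1 -> A * S})
   if (y \notin Cb) && ([forall t : 'I_n.+1, (val t < n)%N ==> ((q t).2 \notin Cb)]
        && ((q ord_max).2 == s'))
   then w d s a y * \prod_(t < n.+1) w d (prevst y q t) (q t).1 (q t).2 else 0)).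
  rewrite [RHS]pair_big /=; apply: eq_bigr => [[a y]] _ /=.
  apply: eq_bigr => q _.
  have -> : (ord_max : 'I_n.+2) = lift ord0 ord_max by apply/ord_inj; rewrite lift0.
  rewrite fconsS forall_ord_recl fcons0.
  under eq_forallb => t do rewrite fconsS lift0 ltnS.
  rewrite /= big_ord_recl fcons0 /=.
  under eq_bigr => t _ do rewrite prevst_fcons fconsS.
  by rewrite andbA.
move=> a _; rewrite big_mkcond /=; apply: eq_bigr => y _.
case: (y \notin Cb) => /=; last by rewrite big1.
rewrite big_distrr /= big_mkcond; apply: eq_bigr => q _.
by case: ifP; rewrite ?mulr0.
Qed.

Hypothesis HP0 : forall s a s', 0 <= P s a s'.
Hypothesis HP1 : forall s a, \sum_(s' : S) P s a s' = 1.
Hypothesis HGam : forall s a s', 0 < Gam s a s' < 1.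
Hypothesis Hpi0 : forall s a, inC s -> 0 <= pi s a.
Hypothesis Hpi1 : forall s, inC s -> \sum_(a : A) pi s a = 1.
Hypothesis Ci_Cb_disjoint : forall s, s \in Ci -> s \notin Cb.

Lemma inC_interior y : y \in Ci -> inC y.
Proof. by rewrite /Defs.inC => ->. Qed.

Lemma inC_boundary y : y \in Cb -> inC y.
Proof. by rewrite /Defs.inC orbC => ->. Qed.

Lemma PC_ge0 s a y : 0 <= PC s a y.
Proof.
rewrite /Defs.PC; case: ifP => // _; case: ifP => _ //.
by apply: addr_ge0 => //; apply: sumr_ge0.
Qed.

Lemma PC_out s a y : ~~ inC y -> PC s a y = 0.
Proof. by rewrite /Defs.PC => ->. Qed.

Lemma sum_PC s a : inC s -> \sum_y PC s a y = 1.
Proof.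
move=> Cs.
have PC_split y : PC s a y = (if inC y then P s a y else 0) +
    (if y == s then \sum_(z | ~~ inC z) P s a z else 0).
  rewrite /Defs.PC; case: (boolP (inC y)) => Cy /=.
    case: eqP => [->|/eqP]; first by rewrite eqxx.
    by rewrite eq_sym => /negbTE ->; rewrite addr0.
  case: eqP => [ys|]; last by rewrite addr0.
  by move: Cy; rewrite ys Cs.
rewrite (eq_bigr _ (fun y _ => PC_split y)) big_split /= -!big_mkcond.
by rewrite big_pred1_eq /= -(HP1 s a) [RHS](bigID inC).
Qed.

Lemma stepw_ge0 d s a y : inC s -> 0 <= w d s a y.
Proof.
move=> Cs; rewrite /stepw; apply: mulr_ge0.
  exact: mulr_ge0 (Hpi0 _ Cs) (PC_ge0 _ _ _).
by case: d => //; case/andP: (HGam s a y) => /ltW.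
Qed.

Lemma stepw_out d s a y : ~~ inC y -> w d s a y = 0.
Proof. by move=> Cy; rewrite /stepw PC_out // mulr0 mul0r. Qed.

Lemma stepw_disc_le s a y : inC s -> w true s a y <= w false s a y.
Proof.
move=> Cs; rewrite /stepw mulr1; apply: ler_piMr.
  exact: mulr_ge0 (Hpi0 _ Cs) (PC_ge0 _ _ _).
by case/andP: (HGam s a y) => _ /ltW.
Qed.

Lemma sum_stepw s : inC s -> \sum_a \sum_y w false s a y = 1.
Proof.
move=> Cs; rewrite -(Hpi1 Cs); apply: eq_bigr => a _.
rewrite /stepw; under eq_bigr do rewrite mulr1.
by rewrite -big_distrr /= sum_PC // mulr1.
Qed.

Lemma firstHitWS_interior d n s s' :
  F d n.+1 s s' = \sum_a \sum_(y in Ci) w d s a y * F d n y s'.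
Proof.
rewrite firstHitWS; apply: eq_bigr => a _.
rewrite big_mkcond [RHS]big_mkcond; apply: eq_bigr => y _ /=.
case: (boolP (y \in Ci)) => yi; first by rewrite Ci_Cb_disjoint.
case: ifP => // yb; rewrite stepw_out ?mul0r //.
by rewrite /Defs.inC (negbTE yi).
Qed.

Lemma firstHitW_ge0 d n s s' : inC s -> 0 <= F d n s s'.
Proof.
elim: n s => [|n IH] s Cs.
  by rewrite firstHitW0; apply: sumr_ge0 => a _; apply: stepw_ge0.
rewrite firstHitWS_interior; apply: sumr_ge0 => a _; apply: sumr_ge0 => y yi.
by apply: mulr_ge0; [apply: stepw_ge0 | apply/IH/inC_interior].
Qed.

Lemma firstHitW_disc_le n s s' : inC s -> F true n s s' <= F false n s s'.
Proof.
elim: n s => [|n IH] s Cs.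
  by rewrite !firstHitW0; apply: ler_sum => a _; apply: stepw_disc_le.
rewrite !firstHitWS_interior; apply: ler_sum => a _; apply: ler_sum => y yi.
have Cy := inC_interior yi.
by apply: ler_pM; [apply: stepw_ge0 | apply: firstHitW_ge0 | apply: stepw_disc_le | apply: IH].
Qed.

Definition hitSum d N s s' := \sum_(n < N) F d n s s'.

Lemma hitSumS d N s s' : hitSum d N.+1 s s' =
  \sum_a w d s a s' + \sum_a \sum_(y in Ci) w d s a y * hitSum d N y s'.
Proof.
rewrite /hitSum big_ord_recl firstHitW0; congr (_ + _).
under eq_bigr => i _ do rewrite lift0 firstHitWS_interior.
rewrite exchange_big; apply: eq_bigr => a _; rewrite exchange_big.
by apply: eq_bigr => y _; rewrite big_distrr.
Qed.

Lemma hitSum_ge0 d N s s' : inC s -> 0 <= hitSum d N s s'.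
Proof. by move=> Cs; apply: sumr_ge0 => n _; apply: firstHitW_ge0. Qed.

Lemma hitSum_disc_le N s s' : inC s -> hitSum true N s s' <= hitSum false N s s'.
Proof. by move=> Cs; apply: ler_sum => n _; apply: firstHitW_disc_le. Qed.

Lemma sum_hitSum_le1 N s : inC s -> \sum_(s' in Cb) hitSum false N s s' <= 1.
Proof.
elim: N s => [|N IH] s Cs.
  by rewrite big1 ?ler01 // => s' _; rewrite /hitSum big_ord0.
under eq_bigr do rewrite hitSumS.
rewrite big_split /=.
apply: (@le_trans _ _ (\sum_a \sum_(y in Cb) w false s a y +
                       \sum_a \sum_(y in Ci) w false s a y)).
  apply: lerD; first by rewrite exchange_big.
  rewrite exchange_big; apply: ler_sum => a _; rewrite exchange_big /=.
  apply: ler_sum => y yi; rewrite -big_distrr /=; apply: ler_piMr.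
    exact: stepw_ge0.
  exact/IH/inC_interior.
rewrite -big_split /= -(sum_stepw Cs); apply: ler_sum => a _.
rewrite big_mkcond /= [X in _ + X]big_mkcond /= -big_split /=.
apply: ler_sum => y _.
case: (boolP (y \in Cb)) => yb; case: (boolP (y \in Ci)) => yi.
- by move: (Ci_Cb_disjoint yi); rewrite yb.
- by rewrite addr0.
- by rewrite add0r.
- by rewrite addr0; apply: stepw_ge0.
Qed.

Lemma hitSum_le1 N s s' : inC s -> s' \in Cb -> hitSum false N s s' <= 1.
Proof.
move=> Cs bs'; apply: le_trans (sum_hitSum_le1 N Cs).
by rewrite (bigD1 s') //= lerDl; apply: sumr_ge0 => y _; apply: hitSum_ge0.
Qed.

Lemma hitSum_cvg d s s' : inC s -> s' \in Cb -> cvgn (fun N => hitSum d N s s').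
Proof.
move=> Cs bs'; apply: nondecreasing_is_cvgn.
  apply/nondecreasing_seqP => N; rewrite /hitSum big_ord_recr /= lerDl.
  exact: firstHitW_ge0.
exists 1 => _ [N _ <-]; case: d; last exact: hitSum_le1.
exact: le_trans (hitSum_disc_le N s' Cs) (hitSum_le1 N Cs bs').
Qed.

Definition hitLim d s s' := limn (fun N => hitSum d N s s').

Lemma hitLim_rec d s s' : inC s -> s' \in Cb -> hitLim d s s' =
  \sum_a w d s a s' + \sum_a \sum_(y in Ci) w d s a y * hitLim d y s'.
Proof.
move=> Cs bs'.
have lim_shift : (fun N => hitSum d N.+1 s s') @ \oo --> hitLim d s s'.
  by rewrite (cvg_shiftS (fun N => hitSum d N s s')); apply: hitSum_cvg.
have lim_rec : (fun N => hitSum d N.+1 s s') @ \oo -->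
    \sum_a w d s a s' + \sum_a \sum_(y in Ci) w d s a y * hitLim d y s'.
  under eq_fun do rewrite hitSumS.
  apply: cvgD; first exact: cvg_cst.
  apply: cvg_big => [|a _]; first exact: add_continuous.
  apply: cvg_big => [|y yi]; first exact: add_continuous.
  by apply: cvgMl_tmp; apply: hitSum_cvg (inC_interior yi) bs'.
exact: cvg_unique lim_shift lim_rec.
Qed.

Lemma hitLim_ge0 d s s' : inC s -> s' \in Cb -> 0 <= hitLim d s s'.
Proof.
move=> Cs bs'; apply: limr_ge; first exact: hitSum_cvg.
by apply: nearW => N; apply: hitSum_ge0.
Qed.

Lemma hitLim_disc_le s s' : inC s -> s' \in Cb -> hitLim true s s' <= hitLim false s s'.
Proof.
move=> Cs bs'; apply: ler_lim; [exact: hitSum_cvg | exact: hitSum_cvg |].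
by apply: nearW => N; apply: hitSum_disc_le.
Qed.

Lemma hitLim_disc_eq0 s s' : inC s -> s' \in Cb ->
  hitLim false s s' <= 0 -> hitLim true s s' = 0.
Proof.
move=> Cs bs' le0; apply/le_anti; rewrite hitLim_ge0 // andbT.
exact: le_trans (hitLim_disc_le Cs bs') le0.
Qed.

Local Notation hh := (h P Gam pi Ci Cb).
Local Notation HH := (Hcond P Gam pi Ci Cb).
Local Notation Cprime := (Cprime P Gam pi Ci Cb).
Local Notation Ph := (Ph P Gam pi Ci Cb).

Lemma h_interior s' y : y \in Ci -> hh s' y = hitLim false y s'.
Proof. by rewrite /h => /Ci_Cb_disjoint /negbTE ->. Qed.

Lemma Hcond_hitLim s s' : HH s s' = hitLim true s s' / hitLim false s s'.
Proof. by rewrite /Hcond /h /Gtilde /Ptilde; case: (s \in Cb). Qed.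

Lemma Cprime_interior s' s : s \in Ci -> Cprime s' s = (0 < hitLim false s s').
Proof. by move=> si; rewrite /Defs.Cprime inC_interior // h_interior. Qed.

Lemma sysRHS_h_transform (K : S -> A -> S -> R) s s' :
  inC s -> s' \in Cb -> 0 < hitLim false s s' ->
  (forall a y, K s a y = PC s a y * pi s a * hh s' y / hitLim false s s') ->
  sysRHS P Gam pi Ci Cb K HH s s' = HH s s'.
Proof.
move=> Cs bs' hit_gt0 K_def; have hit_neq0 := gt_eqF hit_gt0.
rewrite Hcond_hitLim (hitLim_rec true Cs bs') mulrDl addrC /sysRHS.
congr (_ + _); last first.
  rewrite big_distrl /=; apply: eq_bigr => a _.
  by rewrite K_def /h bs' eqxx /stepw /=; field; rewrite hit_neq0.
rewrite [in RHS]exchange_big [RHS]big_distrl /=.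
rewrite [RHS](bigID (fun y => Cprime s' y)) /= [X in _ = _ + X]big1 ?addr0.
  apply: eq_bigr => y /andP[yi]; rewrite Cprime_interior // => hy_gt0.
  rewrite big_distrl /=; apply: eq_bigr => a _.
  rewrite K_def h_interior // Hcond_hitLim /stepw /=; field.
  by rewrite hit_neq0 gt_eqF.
move=> y /andP[yi]; rewrite Cprime_interior // -leNgt => hy_le0.
by rewrite hitLim_disc_eq0 ?inC_interior // big1 ?mul0r // => a _; rewrite mulr0.
Qed.

Lemma Hcond_solvesSys : solvesSys P Gam pi Ci Cb HH.
Proof.
split=> [s s' bs' si cp | s s' /and3P[bs bs' Pt_gt0]]; symmetry.
  have hs_gt0 : 0 < hitLim false s s' by move: cp; rewrite Cprime_interior.
  apply: sysRHS_h_transform (inC_interior si) bs' hs_gt0 _ => a y.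
  by rewrite /Defs.Ph (h_interior s' si).
exact: sysRHS_h_transform (inC_boundary bs) bs' Pt_gt0 (fun a y => erefl).
Qed.

Lemma Hcond_ge0 s s' : sysDom P Gam pi Ci Cb s s' -> 0 <= HH s s'.
Proof.
case/andP=> bs' /orP[/andP[/inC_interior Cs _] | /and3P[/inC_boundary Cs _ _]];
  by rewrite Hcond_hitLim divr_ge0 // hitLim_ge0.
Qed.

Section Interior.
Variable s' : S.
Hypothesis bs' : s' \in Cb.

Definition interiorC' y := (y \in Ci) && Cprime s' y.

Lemma Ph_ge0 s a y : interiorC' s -> interiorC' y -> 0 <= Ph s' s a y.
Proof.
case/andP=> si; rewrite Cprime_interior // => hs; case/andP=> yi.
rewrite Cprime_interior // => hy.
rewrite /Defs.Ph !h_interior //; apply: divr_ge0; last exact: ltW.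
apply: mulr_ge0; last exact: ltW.
exact: mulr_ge0 (PC_ge0 _ _ _) (Hpi0 _ (inC_interior si)).
Qed.

Lemma sum_Ph_le1 s : interiorC' s ->
  \sum_(y | interiorC' y) \sum_a Ph s' s a y <= 1.
Proof.
case/andP=> si; rewrite Cprime_interior // => hs.
have Cs := inC_interior si.
have -> : \sum_(y | interiorC' y) \sum_a Ph s' s a y =
    (\sum_(y | interiorC' y) \sum_a w false s a y * hitLim false y s')
      / hitLim false s s'.
  rewrite big_distrl; apply: eq_bigr => y /andP[yi _].
  rewrite big_distrl; apply: eq_bigr => a _.
  by rewrite /Defs.Ph !h_interior // /stepw /=; field; rewrite gt_eqF.
rewrite ler_pdivrMr // mul1r [X in _ <= X](hitLim_rec false Cs bs').
apply: (@le_trans _ _ (\sum_a \sum_(y in Ci) w false s a y * hitLim false y s')).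
  2: by rewrite lerDr; apply: sumr_ge0 => a _; apply: stepw_ge0.
rewrite [X in _ <= X]exchange_big /= big_mkcond [X in _ <= X]big_mkcond /=.
apply: ler_sum => y _; rewrite /interiorC'; case: (boolP (y \in Ci)) => yi //=.
case: ifP => _ //; apply: sumr_ge0 => a _.
by apply: mulr_ge0; [apply: stepw_ge0 | apply: hitLim_ge0 (inC_interior yi) bs'].
Qed.

Lemma solvesSys_interior_unique (G : S -> S -> R) :
  solvesSys P Gam pi Ci Cb G -> forall s, interiorC' s -> G s s' = HH s s'.
Proof.
move=> [G_int _]; have [H_int _] := Hcond_solvesSys.
have [g [g_ge0 g_lt1 Gam_le_g]] :
    exists g, [/\ 0 <= g, g < 1 & forall x : S * A * S, Gam x.1.1 x.1.2 x.2 <= g].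
  by apply: uniform_lt1_bound => x; case/andP: (HGam x.1.1 x.1.2 x.2).
pose Q s y := if interiorC' s && interiorC' y then
                \sum_a Ph s' s a y * Gam s a y else 0.
have Q_ge0 s y : 0 <= Q s y.
  rewrite /Q; case: ifP => // /andP[Is Iy]; apply: sumr_ge0 => a _.
  by apply: mulr_ge0; [apply: Ph_ge0 | case/andP: (HGam s a y) => /ltW].
have Q_rows s : interiorC' s -> \sum_(y | interiorC' y) Q s y <= g.
  move=> Is; apply: (@le_trans _ _ (g * \sum_(y | interiorC' y) \sum_a Ph s' s a y)).
    rewrite big_distrr; apply: ler_sum => y Iy; rewrite /Q Is Iy big_distrr.
    apply: ler_sum => a _; rewrite mulrC; apply: ler_wpM2r; first exact: Ph_ge0.
    exact: (Gam_le_g (s, a, y)).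
  by rewrite -[X in _ <= X]mulr1; apply: ler_wpM2l => //; apply: sum_Ph_le1.
have diff_fix s : interiorC' s -> G s s' - HH s s' =
    \sum_(y | interiorC' y) Q s y * (G y s' - HH y s').
  move=> Is; have /andP[si cp] := Is.
  rewrite (G_int s s' bs' si cp) (H_int s s' bs' si cp).
  rewrite /sysRHS opprD addrACA subrr addr0 -sumrB; apply: eq_bigr => y Iy.
  rewrite /Q ifT ?Is // big_distrl -sumrB /=.
  by apply: eq_bigr => a _; rewrite -mulrBr.
move=> s Is; apply/eqP; rewrite -subr_eq0; apply/eqP.
exact: contraction_fixpoint_eq0 g_ge0 g_lt1 Q_ge0 Q_rows diff_fix s Is.
Qed.

End Interior.

Lemma Hcond_minimal (G : S -> S -> R) :
  solvesSys P Gam pi Ci Cb G -> forall s s', sysDom P Gam pi Ci Cb s s' ->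
  HH s s' <= G s s'.
Proof.
move=> G_sol s s' /andP[bs' /orP[/andP[si cp] | sp]].
  by rewrite (solvesSys_interior_unique bs' G_sol) //; apply/andP.
have [_ H_bd] := Hcond_solvesSys; have [_ G_bd] := G_sol.
rewrite (H_bd s s' sp) (G_bd s s' sp) /sysRHS lerD2r.
apply: ler_sum => y Iy; apply: ler_sum => a _.
by rewrite (solvesSys_interior_unique bs' G_sol).
Qed.

End FirstHit.

Theorem proposition3 (R : realType) (S A : finType)
  (P : S -> A -> S -> R) (Gam : S -> A -> S -> R) (pi : S -> A -> R)
  (B Ci Cb : {set S})
  (HP0 : forall s a s', 0 <= P s a s')
  (HP1 : forall s a, \sum_(s' : S) P s a s' = 1)
  (HGam : forall s a s', 0 < Gam s a s' < 1)
  (Hpi0 : forall s a, inC Ci Cb s -> 0 <= pi s a)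
  (Hpi1 : forall s, inC Ci Cb s -> \sum_(a : A) pi s a = 1)
  (HCi : Ci \subset ~: B) (HCb : Cb \subset B)
  (Hreach : pi_reachable P pi Ci Cb) :
  minNonnegSol P Gam pi Ci Cb (Hcond P Gam pi Ci Cb).
Proof.
have disjoint s : s \in Ci -> s \notin Cb.
  move=> si; apply/negP => sb.
  by move: (fintype.subsetP HCi s si); rewrite inE (fintype.subsetP HCb s sb).
split; first exact: Hcond_solvesSys.
split=> [s s'|G G_sol _ s s']; first exact: Hcond_ge0.
exact: Hcond_minimal.
Qed.
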